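(* Let $\Pi$ and $\mathcal{R}$ be finite sets of unary and binary relation symbols, and let $\mathcal{H}$ be a class of pointed $(\Pi,\mathcal{R})$-models that is definable by a first-order $(\Pi,\mathcal{R})$-theory. If a $(\Pi,\mathcal{R})$-automaton $A$ converges in $\mathcal{H}$, then $A$ specifies a local algorithm in $\mathcal{H}$.
   Context: A $(\Pi,\mathcal{R})$-model $M$ ($\mathcal{R}=\{R_1,\dots,R_k\}$) consists of a nonempty domain $W$ (possibly infinite) with $P^M\subseteq W$ for $P\in\Pi$ and $R_i^M\subseteq W\times W$; a pointed model is $(M,w)$ with $w\in W$. A class $\mathcal{H}$ of pointed $(\Pi,\mathcal{R})$-models is definable by a first-order theory if there is a (possibly infinite) set $T$ of first-order sentences over the signature $(\Pi,\mathcal{R})$ (with equality) such that for every pointed $(\Pi,\mathcal{R})$-model $(M,w)$: $(M,w)\in\mathcal{H}$ iff $M\models T$. A $(\Pi,\mathcal{R})$-automaton is a tuple $A=(Q,\mathcal{M},\pi,\delta,\mu,F,G)$ with $Q,\mathcal{M}$ nonempty finite or countably infinite sets, $\pi:\mathrm{Pow}(\Pi)\to Q$, $\delta:(\mathrm{Pow}(\mathcal{M}))^k\times Q\to Q$, $\mu:Q\times\mathcal{R}\to\mathcal{M}$, $F\subseteq Q$, $G\subseteq Q\setminus F$. On a model $M$ with domain $W$: $f_0(w)=\pi(\{P\in\Pi:w\in P^M\})$, $f_{n+1}(w)=\delta((N_1,\dots,N_k),f_n(w))$ with $N_i=\{\mu(f_n(v),R_i):(w,v)\in R_i^M\}$.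 $A$ accepts $(M,w)$ in round $n$ if $f_n(w)\in F$ and $f_m(w)\notin G$ for all $m<n$; it rejects $(M,w)$ in round $n$ if $f_n(w)\in G$ and $f_m(w)\notin F$ for all $m<n$. $A$ converges in $\mathcal{H}$ if for every $(M,w)\in\mathcal{H}$ there is some round in which $A$ accepts or rejects $(M,w)$. $A$ specifies a local algorithm in $\mathcal{H}$ if there is $n\in\mathbb{N}$ such that every $(M,w)\in\mathcal{H}$ is accepted or rejected by $A$ in some round $m\le n$. *)

From mathcomp Require Import all_boot.
Set Implicit Arguments.
Unset Strict Implicit.
Unset Printing Implicit Defensive.

Record model (Pi Rs : finType) := Model {
  dom :> Type;
  dom_inhabited : inhabited dom;
  Pint : Pi -> dom -> Prop;
  Rint : Rs -> dom -> dom -> Prop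
}.

Definition pclass (Pi Rs : finType) := forall M : model Pi Rs, dom M -> Prop.

(* ---------- First-order logic with equality over (Pi,Rs) ----------
   Variables are de Bruijn indices. *)
Inductive formula (Pi Rs : Type) : Type :=
| FFalse
| FEq of nat & nat
| FPred of Pi & nat
| FRel of Rs & nat & nat
| FNot of formula Pi Rs
| FAnd of formula Pi Rs & formula Pi Rs
| FOr of formula Pi Rs & formula Pi Rs
| FImp of formula Pi Rs & formula Pi Rs
| FAll of formula Pi Rs
| FEx of formula Pi Rs.

Arguments FFalse {Pi Rs}.

Definition scons (W : Type) (d : W) (e : nat -> W) : nat -> W :=
  fun n => match n with 0 => d | n'.+1 => e n' end.

Fixpoint sat (Pi Rs : finType) (M : model Pi Rs) (e : nat -> dom M)
    (phi : formula Pi Rs) : Prop :=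
  match phi with
  | FFalse => False
  | FEq i j => e i = e j
  | FPred p i => Pint p (e i)
  | FRel r i j => Rint r (e i) (e j)
  | FNot a => ~ sat e a
  | FAnd a b => sat e a /\ sat e b
  | FOr a b => sat e a \/ sat e b
  | FImp a b => sat e a -> sat e b
  | FAll a => forall d : dom M, sat (scons d e) a
  | FEx a => exists d : dom M, sat (scons d e) a
  end.

Fixpoint closed_at (Pi Rs : Type) (n : nat) (phi : formula Pi Rs) : Prop :=
  match phi with
  | FFalse => True
  | FEq i j => i < n /\ j < n
  | FPred _ i => i < n
  | FRel _ i j => i < n /\ j < n
  | FNot a => closed_at n a
  | FAnd a b | FOr a b | FImp a b => closed_at n a /\ closed_at n b
  | FAll a | FEx a => closed_at n.+1 a
  end.

Definition sentence (Pi Rs : Type) (phi : formula Pi Rs) := closed_at 0 phi.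

(* M |= T : every sentence of T holds in M (under every assignment;
   irrelevant for sentences). *)
Definition models_theory (Pi Rs : finType) (M : model Pi Rs)
    (T : formula Pi Rs -> Prop) : Prop :=
  forall phi, T phi -> forall e : nat -> dom M, sat e phi.

Definition FO_definable (Pi Rs : finType) (H : pclass Pi Rs) : Prop :=
  exists T : formula Pi Rs -> Prop,
    (forall phi, T phi -> sentence phi) /\
    (forall (M : model Pi Rs) (w : dom M), H M w <-> models_theory M T).

(* ---------- (Pi,R)-automata ----------
   Q and Msg are finite or countably infinite (countType); they are
   nonempty automatically since pi and mu produce elements.
   Pow(X) is rendered as X -> Prop. *)
Record automaton (Pi Rs : finType) := Automaton {
  Q : countType;
  Msg : countType;
  pi_ : (Pi -> Prop) -> Q;
  delta : (Rs -> (Msg -> Prop)) -> Q -> Q;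
  mu : Q -> Rs -> Msg;
  Fset : Q -> Prop;
  Gset : Q -> Prop;
  G_disj_F : forall q, Gset q -> ~ Fset q
}.
Arguments pi_ {Pi Rs} a _.
Arguments delta {Pi Rs} a _ _.
Arguments mu {Pi Rs} a _ _.
Arguments Fset {Pi Rs} a _.
Arguments Gset {Pi Rs} a _.
Arguments Q {Pi Rs} a.
Arguments Msg {Pi Rs} a.

Fixpoint run (Pi Rs : finType) (A : automaton Pi Rs) (M : model Pi Rs)
    (n : nat) (w : dom M) : Q A :=
  match n with
  | 0 => pi_ A (fun P => Pint P w)
  | n'.+1 =>
      delta A (fun r => fun m => exists v, Rint r w v /\ mu A (@run Pi Rs A M n' v) r = m)
              (@run Pi Rs A M n' w)
  end.
Arguments run {Pi Rs} A M n w.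

Definition accepts_in {Pi Rs : finType} (A : automaton Pi Rs) (M : model Pi Rs)
    (w : dom M) (n : nat) : Prop :=
  Fset A (run A M n w) /\ forall m, m < n -> ~ Gset A (run A M m w).

Definition rejects_in {Pi Rs : finType} (A : automaton Pi Rs) (M : model Pi Rs)
    (w : dom M) (n : nat) : Prop :=
  Gset A (run A M n w) /\ forall m, m < n -> ~ Fset A (run A M m w).

Arguments accepts_in {Pi Rs} A M w n.
Arguments rejects_in {Pi Rs} A M w n.

Definition converges_in (Pi Rs : finType) (A : automaton Pi Rs) (H : pclass Pi Rs) :=
  forall (M : model Pi Rs) (w : dom M), H M w ->
    exists n, accepts_in A M w n \/ rejects_in A M w n.

Definition local_algorithm_in (Pi Rs : finType) (A : automaton Pi Rs) (H : pclass Pi Rs) :=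
  exists N : nat, forall (M : model Pi Rs) (w : dom M), H M w ->
    exists m, m <= N /\ (accepts_in A M w m \/ rejects_in A M w m).

From mathcomp Require Import all_boot.
From mathcomp Require Import boolp classical_sets filter.

Set Implicit Arguments.
Unset Strict Implicit.
Unset Printing Implicit Defensive.

(* Suppose A converges on H but is not local: for every N some pointed model
   (M_N, w_N) in H is still undecided after N rounds.  Take the ultraproduct of
   the M_N along a nonprincipal ultrafilter on N.  By Łoś's theorem it satisfies
   the theory defining H, so A decides it in some round n.  Because Pi and R are
   finite, each round of A only ever reaches finitely many states, so by
   induction the first n rounds on the ultraproduct agree with those on almost
   every factor; a factor with N >= n is then decided by round n. *)

Lemma pred_supported_mask (T : eqType) (s : seq T) (P : T -> Prop) :
  (forall t, P t -> t \in s) ->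
  exists b : (size s).-tuple bool, P = (fun t => t \in mask b s).
Proof.
move=> Ps; exists (map_tuple (fun t => `[< P t >]) (in_tuple s)).
apply/funext => t; apply/propext; rewrite /= -filter_mask mem_filter.
by split => [Pt|/andP[/asboolP]//]; rewrite asboolT ?Ps.
Qed.

Definition msgs_of (Pi Rs : finType) (A : automaton Pi Rs) (L : seq (Q A)) :=
  [seq (r, mu A q r) | r <- enum Rs, q <- L].

Lemma mem_msgs_of (Pi Rs : finType) (A : automaton Pi Rs) (L : seq (Q A)) q r :
  q \in L -> (r, mu A q r) \in msgs_of L.
Proof. exact: (allpairs_f (fun r q => (r, mu A q r)) (mem_enum _ r)). Qed.

Lemma run_range_finite (Pi Rs : finType) (A : automaton Pi Rs) (m : nat) :
  exists L : seq (Q A), forall (M : model Pi Rs) (w : dom M), run A M m w \in L.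
Proof.
elim: m => [|m [L runL]].
  exists [seq pi_ A (fun p => p \in mask b (enum Pi))
         | b : (size (enum Pi)).-tuple bool <- enum {: (size (enum Pi)).-tuple bool}].
  move=> M w /=.
  have [b ->] := @pred_supported_mask _ _ (fun p => Pint p w) (fun p _ => mem_enum Pi p).
  exact: (map_f (fun b : _.-tuple _ => _)) (mem_enum _ b).
set msgs := msgs_of L.
exists [seq delta A (fun r msg => (r, msg) \in mask b msgs) q
       | b : (size msgs).-tuple bool <- enum {: (size msgs).-tuple bool}, q : Q A <- L].
move=> M w /=.
pose N rm := exists v, Rint rm.1 w v /\ mu A (run A M m v) rm.1 = rm.2.
have [b eb] : exists b : (size msgs).-tuple bool, N = (fun rm => rm \in mask b msgs).
  apply: pred_supported_mask => -[r msg] [v [_ /= <-]].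
  exact/mem_msgs_of/runL.
apply/allpairsP; exists (b, run A M m w); split=> //=; first exact: mem_enum.
congr (delta A _ _); apply/funext => r; apply/funext => msg.
exact: (congr1 (fun P => P (r, msg)) eb).
Qed.

Section UltraFilterFacts.
Variables (I : Type) (U : set_system I).
Context {U_ultra : UltraFilter U}.

Lemma near_not (P : I -> Prop) :
  (\forall i \near U, ~ P i) <-> ~ \forall i \near U, P i.
Proof.
split=> [nP P_|nP]; last by have [|] := in_ultra_setVsetC P U_ultra.
by apply: (filter_not_empty U); apply: filterS (filterI nP P_) => i [].
Qed.

Lemma near_or (P Q : I -> Prop) :
  (\forall i \near U, P i \/ Q i) <-> (\forall i \near U, P i) \/ \forall i \near U, Q i.
Proof.
split=> [PQ|[] PQ]; rewrite nearE; last 2 first.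
- by apply: filterS PQ => i; left.
- by apply: filterS PQ => i; right.
apply: contrapT => /not_orP[] /near_not nP /near_not nQ.
apply: (filter_not_empty U); apply: filterS (filterI PQ (filterI nP nQ)).
by move=> i [[Pi|Qi] [nPi nQi]]; [exact: nPi | exact: nQi].
Qed.

Lemma near_imply (P Q : I -> Prop) :
  (\forall i \near U, P i -> Q i) <-> ((\forall i \near U, P i) -> \forall i \near U, Q i).
Proof.
split=> [PQ P_|PQ]; first by rewrite nearE; apply: filterS (filterI PQ P_) => i [].
rewrite nearE; have [P_|nP] := in_ultra_setVsetC P U_ultra.
- by apply: filterS (PQ P_) => i Qi _.
- by apply: filterS nP => i nPi /nPi.
Qed.

Lemma near_iff_near (P : I -> Prop) :
  \forall i \near U, P i <-> \forall j \near U, P j.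
Proof.
rewrite nearE; have [P_|nP] := in_ultra_setVsetC P U_ultra.
- by apply: filterS (P_) => i Pi; split.
- by apply: filterS (nP) => i nPi; split=> // P_; case: ((near_not P).1 nP).
Qed.

Lemma near_all_mem (T : choiceType) (s : seq T) (P : T -> I -> Prop) :
  (forall t, t \in s -> \forall i \near U, P t i) ->
  \forall i \near U, forall t, t \in s -> P t i.
Proof.
move=> sP; have all_sP : U (fun i => forall t : seq_sub s, P (val t) i).
  by apply: filter_forall => t; exact: sP (valP t).
rewrite nearE; apply: filterS all_sP => i Pi t ts; exact: (Pi (SeqSub ts)).
Qed.

Lemma near_pred_eq (T : choiceType) (s : seq T) (P : T -> I -> Prop) (Q : T -> Prop) :
  (forall t i, P t i -> t \in s) -> (forall t, Q t -> t \in s) ->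
  (forall t, t \in s -> Q t <-> \forall i \near U, P t i) ->
  \forall i \near U, (fun t => P t i) = Q.
Proof.
move=> Ps Qs QP.
have agree : \forall i \near U, forall t, t \in s -> (P t i <-> Q t).
  apply: near_all_mem => t ts; rewrite nearE.
  by apply: filterS (near_iff_near (P t)) => i; rewrite QP.
rewrite nearE; apply: filterS agree => i agree_i.
apply/funext => t; apply/propext; split => [Pti|Qt].
- by rewrite -agree_i // (Ps t i).
- by rewrite agree_i // Qs.
Qed.

End UltraFilterFacts.

Section Ultraproduct.
Variables (Pi Rs : finType) (I : Type) (U : set_system I) (M : I -> model Pi Rs).
Context {U_ultra : UltraFilter U}.

Definition ultra_seq := forall i, dom (M i).

Definition ultra_equiv (x y : ultra_seq) := \forall i \near U, x i = y i.

Lemma ultra_equiv_refl x : ultra_equiv x x.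
Proof. exact: nearW. Qed.

Lemma ultra_equiv_sym x y : ultra_equiv x y -> ultra_equiv y x.
Proof. by rewrite /ultra_equiv nearE; apply: filterS. Qed.

Lemma ultra_equiv_trans x y z : ultra_equiv x y -> ultra_equiv y z -> ultra_equiv x z.
Proof.
by move=> xy yz; rewrite /ultra_equiv nearE; apply: filterS (filterI xy yz) => i [->].
Qed.

(* The ultraproduct is the quotient of [ultra_seq] by [ultra_equiv]; a class
   is represented by the predicate [ultra_equiv x]. *)
Definition ultraprod_dom := {P : ultra_seq -> Prop | exists x, P = ultra_equiv x}.

Definition ucls (x : ultra_seq) : ultraprod_dom :=
  exist _ (ultra_equiv x) (ex_intro _ x erefl).

Definition urep (c : ultraprod_dom) : ultra_seq := sval (cid (svalP c)).

Lemma ucls_eq x y : ucls x = ucls y <-> ultra_equiv x y.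
Proof.
split=> [/(congr1 sval) /= equiv_xy|xy].
  by rewrite equiv_xy; exact: ultra_equiv_refl.
rewrite /ucls; apply: eq_exist; apply/funext => z; apply/propext.
split=> [xz|yz]; last exact: ultra_equiv_trans xy yz.
exact: ultra_equiv_trans (ultra_equiv_sym xy) xz.
Qed.

Lemma ucls_urep c : ucls (urep c) = c.
Proof.
case: c => P hP; rewrite /ucls /urep /=; apply: eq_exist.
by case: cid.
Qed.

Lemma near_urep_ucls x : \forall i \near U, urep (ucls x) i = x i.
Proof. by apply/ucls_eq; rewrite ucls_urep. Qed.

Lemma witness_choice (P : forall i, dom (M i) -> Prop) :
  exists y : ultra_seq, forall i, (exists d, P i d) -> P i (y i).
Proof.
have wit i : exists d : dom (M i), (exists d, P i d) -> P i d.
  have [[d Pd]|none] := lem (exists d, P i d); first by exists d.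
  by case: (dom_inhabited (M i)) => d; exists d.
by exists (fun i => sval (cid (wit i))) => i; case: cid.
Qed.

Lemma ultraprod_inhabited : inhabited ultraprod_dom.
Proof. by have [y _] := witness_choice (fun _ _ => True); exists; exact: ucls y. Qed.

Definition ultraproduct : model Pi Rs :=
  @Model Pi Rs ultraprod_dom ultraprod_inhabited
    (fun p c => \forall i \near U, Pint p (urep c i))
    (fun r c d => \forall i \near U, Rint r (urep c i) (urep d i)).

Lemma near_urep_uclsE (Q : forall i, dom (M i) -> Prop) x :
  (\forall i \near U, Q i (urep (ucls x) i)) <-> \forall i \near U, Q i (x i).
Proof.
rewrite !nearE; split=> Q_; apply: filterS (filterI Q_ (near_urep_ucls x)) => i [].
  by move=> + <-.
by move=> + ->.
Qed.

Lemma ultraprod_PintE p x :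
  Pint (m := ultraproduct) p (ucls x) <-> \forall i \near U, Pint p (x i).
Proof. exact: (near_urep_uclsE (fun i v => Pint p v)). Qed.

Lemma ultraprod_RintE r x y :
  Rint (m := ultraproduct) r (ucls x) (ucls y) <-> \forall i \near U, Rint r (x i) (y i).
Proof.
apply: iff_trans (near_urep_uclsE (fun i v => Rint r v (urep (ucls y) i)) x) _.
exact: (near_urep_uclsE (fun i v => Rint r (x i) v)).
Qed.

Lemma ultraprod_forallE (Q : forall i, dom (M i) -> Prop) :
  (forall c : ultraprod_dom, \forall i \near U, Q i (urep c i)) <->
  \forall i \near U, forall d, Q i d.
Proof.
split=> [allQ|Q_ c]; last by rewrite nearE; apply: filterS Q_.
apply: contrapT => /(near_not _).2 nQ.
have [y Qy] := witness_choice (fun i d => ~ Q i d).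
have /near_urep_uclsE Q_y := allQ (ucls y).
apply: (filter_not_empty U); apply: filterS (filterI nQ Q_y) => i [nQi].
by rewrite -existsNE in nQi; exact: Qy.
Qed.

Lemma ultraprod_existsE (Q : forall i, dom (M i) -> Prop) :
  (exists c : ultraprod_dom, \forall i \near U, Q i (urep c i)) <->
  \forall i \near U, exists d, Q i d.
Proof.
split=> [[c Q_c]|Q_]; first by rewrite nearE; apply: filterS Q_c => i; exists (urep c i).
have [y Qy] := witness_choice Q.
by exists (ucls y); apply/near_urep_uclsE; rewrite nearE; apply: filterS Q_ => i /Qy.
Qed.

Lemma scons_urep d (e : nat -> ultraprod_dom) i :
  (fun k => urep (scons d e k) i) = scons (urep d i) (fun k => urep (e k) i).
Proof. by apply/funext => -[]. Qed.

Theorem los (phi : formula Pi Rs) (e : nat -> ultraprod_dom) :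
  sat (M := ultraproduct) e phi <->
  \forall i \near U, sat (M := M i) (fun k => urep (e k) i) phi.
Proof.
elim: phi e => /=.
- by move=> e; split=> //; rewrite nearE => /filter_const.
- move=> i j e; split=> [->|/ucls_eq]; first exact: ultra_equiv_refl.
  by rewrite !ucls_urep.
- by [].
- by [].
- by move=> a IH e; rewrite IH near_not.
- by move=> a IHa b IHb e; rewrite IHa IHb near_andP.
- by move=> a IHa b IHb e; rewrite IHa IHb near_or.
- by move=> a IHa b IHb e; rewrite IHa IHb near_imply.
- move=> a IH e; rewrite -ultraprod_forallE.
  by split=> sat_a d; [move: (sat_a d); rewrite IH | rewrite IH; move: (sat_a d)];
    rewrite !nearE; apply: filterS => i; rewrite scons_urep.
- move=> a IH e; rewrite -ultraprod_existsE.
  by split=> -[d sat_a]; exists d; move: sat_a; rewrite IH;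
    rewrite !nearE; apply: filterS => i; rewrite scons_urep.
Qed.

Lemma ultraproduct_models_theory (T : formula Pi Rs -> Prop) :
  (\forall i \near U, models_theory (M i) T) -> models_theory ultraproduct T.
Proof.
move=> MT phi T_phi e; apply/los.
by rewrite nearE; apply: filterS MT => i /(_ phi T_phi).
Qed.

Section Runs.
Variable A : automaton Pi Rs.

Lemma ultraprod_msgE (m : nat) (x : ultra_seq) (r : Rs) (msg : Msg A) :
  (forall y : ultra_seq,
     \forall i \near U, run A (M i) m (y i) = run A ultraproduct m (ucls y)) ->
  (exists c, Rint (m := ultraproduct) r (ucls x) c /\ mu A (run A ultraproduct m c) r = msg) <->
  \forall i \near U, exists v, Rint r (x i) v /\ mu A (run A (M i) m v) r = msg.
Proof.
move=> run_eq; split=> [[c [Rxc <-]]|msg_].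
  rewrite -(ucls_urep c) in Rxc *; move/ultraprod_RintE: Rxc => Rxc.
  rewrite nearE; apply: filterS (filterI Rxc (run_eq (urep c))) => i [Ri run_i].
  by exists (urep c i); rewrite run_i.
have [y y_msg] := witness_choice (fun i v => Rint r (x i) v /\ mu A (run A (M i) m v) r = msg).
have {}y_msg : \forall i \near U, Rint r (x i) (y i) /\ mu A (run A (M i) m (y i)) r = msg.
  by rewrite nearE; apply: filterS msg_ => i /y_msg.
exists (ucls y); split.
  by apply/ultraprod_RintE; rewrite nearE; apply: filterS y_msg => i [].
by have [i [[_ <-] ->]] := filter_ex (filterI y_msg (run_eq y)).
Qed.

Lemma near_run_ultraproduct (m : nat) (x : ultra_seq) :
  \forall i \near U, run A (M i) m (x i) = run A ultraproduct m (ucls x).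
Proof.
elim: m x => [|m IH] x /=.
  have labels_eq : \forall i \near U,
      (fun p => Pint p (x i)) = (fun p => Pint (m := ultraproduct) p (ucls x)).
    apply: (near_pred_eq (s := enum Pi)) => [p i _|p _|p _];
      [exact: mem_enum | exact: mem_enum | exact: ultraprod_PintE].
  by rewrite nearE; apply: filterS labels_eq => i ->.
have [L runL] := run_range_finite A m.
have msgs_eq : \forall i \near U,
    (fun rm : Rs * Msg A =>
       exists v, Rint rm.1 (x i) v /\ mu A (run A (M i) m v) rm.1 = rm.2) =
    (fun rm => exists c, Rint (m := ultraproduct) rm.1 (ucls x) c /\
                         mu A (run A ultraproduct m c) rm.1 = rm.2).
  apply: (near_pred_eq (s := msgs_of L)) => [[r msg] i [v [_ /= <-]]|[r msg] [c [_ /= <-]]|];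
    [exact/mem_msgs_of/runL | exact/mem_msgs_of/runL | move=> [r msg] _; exact: ultraprod_msgE].
rewrite nearE; apply: filterS (filterI msgs_eq (IH x)) => i [msgs_eq_i ->].
congr (delta A _ _); apply/funext => r; apply/funext => msg.
exact: (congr1 (fun P => P (r, msg)) msgs_eq_i).
Qed.

Lemma near_runs_ultraproduct (n : nat) (x : ultra_seq) :
  \forall i \near U,
    forall k, k <= n -> run A (M i) k (x i) = run A ultraproduct k (ucls x).
Proof.
rewrite nearE; apply: filterS (near_all_mem (s := iota 0 n.+1)
                                (fun k _ => near_run_ultraproduct k x)).
by move=> i run_eq k le_kn; rewrite run_eq // mem_iota leq0n add0n ltnS.
Qed.

End Runs.
End Ultraproduct.

Definition decided_in (Pi Rs : finType) (A : automaton Pi Rs) (M : model Pi Rs)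
    (w : dom M) (n : nat) :=
  accepts_in A M w n \/ rejects_in A M w n.
Arguments decided_in {Pi Rs} A M w n.

Lemma decided_in_run_eq (Pi Rs : finType) (A : automaton Pi Rs)
    (M M' : model Pi Rs) (w : dom M) (w' : dom M') (n : nat) :
  (forall k, k <= n -> run A M k w = run A M' k w') ->
  decided_in A M w n -> decided_in A M' w' n.
Proof.
move=> run_eq; have run_lt k : k < n -> run A M k w = run A M' k w' by move/ltnW/run_eq.
case=> [[F_n noG]|[G_n noF]]; [left|right]; split.
- by rewrite -run_eq.
- by move=> k /[dup] /run_lt <-; exact: noG.
- by rewrite -run_eq.
- by move=> k /[dup] /run_lt <-; exact: noF.
Qed.

Theorem theorem4p3 (Pi Rs : finType) (H : pclass Pi Rs) (A : automaton Pi Rs) :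
  FO_definable H -> converges_in A H -> local_algorithm_in A H.
Proof.
move=> [T [_ H_T]] converges; apply: contrapT => not_local.
have bad N : exists Mw : {M : model Pi Rs & dom M}, H (projT1 Mw) (projT2 Mw) /\
    forall m, m <= N -> ~ decided_in A (projT1 Mw) (projT2 Mw) m.
  apply: contrapT => none; apply: not_local; exists N => M w H_Mw.
  apply: contrapT => undecided; apply: none; exists (existT _ M w); split=> // m le_mN decided.
  by apply: undecided; exists m.
have [Mw Mw_bad] := choice bad.
pose M i := projT1 (Mw i); pose w : ultra_seq M := fun i => projT2 (Mw i).
have [U [U_ultra eventually_U]] := @ultraFilterLemma nat eventually _.
have H_ultra : H (ultraproduct U M) (ucls U w).
  apply/H_T/ultraproduct_models_theory; rewrite nearE; apply: filterS filterT => i _.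
  exact: (H_T (M i) (w i)).1 (proj1 (Mw_bad i)).
have [n decided] := converges _ _ H_ultra.
have late : eventually (fun i => n <= i) by exists n.
have [i [runs_eq le_ni]] :=
  filter_ex (filterI (near_runs_ultraproduct A n w) (eventually_U _ late)).
have [_ undecided] := Mw_bad i; apply: (undecided n le_ni).
apply: decided_in_run_eq decided => k le_kn.
exact/esym/runs_eq.
Qed.
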